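(* Let $(\sigma,b,g_0,g_1)$ be admissible parameters. If condition (2.e) below holds, then condition (2.d) below holds.
   Context: Let $E$, $U_0$, $U_1$ be separable topological spaces whose topologies are defined by complete metrics, and let $\pi,\mu_0,\mu_1$ be $\sigma$-finite Borel measures on $E,U_0,U_1$. $\mathbb{R}_+=[0,\infty)$. Parameters $(\sigma,b,g_0,g_1)$ are admissible if: $b:\mathbb{R}_+\to\mathbb{R}$ is continuous with $b(0)\ge0$; $\sigma:\mathbb{R}_+\times E\to\mathbb{R}$ is Borel with $\sigma(0,u)=0$; $g_0:\mathbb{R}_+\times U_0\to\mathbb{R}$ is Borel with $g_0(0,u)=0$ and $g_0(x,u)+x\ge0$ for $x>0$; $g_1:\mathbb{R}_+\times U_1\to\mathbb{R}$ is Borel with $g_1(x,u)+x\ge0$ for $x\ge0$. Let $l_0(x,y,u)=g_0(x,u)-g_0(y,u)$. (2.d): for each $m\ge1$ there is a nonnegative nondecreasing function $\rho_m$ on $\mathbb{R}_+$ with $\int_{0+}\rho_m(z)^{-2}dz=\infty$, $\int_E|\sigma(x,u)-\sigma(y,u)|^2\pi(du)\le\rho_m(|x-y|)^2$, and $\int_{U_0}\mu_0(du)\int_0^1\frac{l_0(x,y,u)^2(1-t)1_{\{|l_0(x,y,u)|\le n\}}}{\rho_m(|(x-y)+t\,l_0(x,y,u)|)^2}dt\le c(m,n)$ for every $n\ge1$ and $0\le x,y\le m$, with constants $c(m,n)\ge0$. (2.e): for each $u\in U_0$ the function $x\mapsto g_0(x,u)$ is nondecreasing, and for each $m\ge1$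 there is a nonnegative nondecreasing function $\rho_m$ on $\mathbb{R}_+$ with $\int_{0+}\rho_m(z)^{-2}dz=\infty$ and $\int_E|\sigma(x,u)-\sigma(y,u)|^2\pi(du)+\int_{U_0}|l_0(x,y,u)|\wedge|l_0(x,y,u)|^2\mu_0(du)\le\rho_m(|x-y|)^2$ for all $0\le x,y\le m$. *)

From HB Require Import structures.
From mathcomp Require Import all_boot all_order all_algebra.
From mathcomp Require Import all_classical all_reals all_analysis.
Set Implicit Arguments. Unset Strict Implicit. Unset Printing Implicit Defensive.
Import Order.TTheory GRing.Theory Num.Theory.
Import numFieldNormedType.Exports.
Local Open Scope classical_set_scope.
Local Open Scope ring_scope.

(* Standing assumption on the spaces E, U_0, U_1: a measurable space whose
   sigma-algebra is the Borel sigma-algebra of a complete separable metric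
   (i.e. the Borel space of a Polish space). *)

Definition is_metric (R : realType) (T : Type) (dist : T -> T -> R) : Prop :=
  (forall x y, 0 <= dist x y) /\
  (forall x y, dist x y = 0 <-> x = y) /\
  (forall x y, dist x y = dist y x) /\
  (forall x y z, dist x z <= dist x y + dist y z).

Definition metric_complete (R : realType) (T : Type) (dist : T -> T -> R) : Prop :=
  forall u : nat -> T,
    (forall eps : R, 0 < eps -> exists N : nat, forall p q : nat,
        (N <= p)%N -> (N <= q)%N -> dist (u p) (u q) < eps) ->
    exists l : T, forall eps : R, 0 < eps -> exists N : nat, forall p : nat,
        (N <= p)%N -> dist (u p) l < eps.

Definition metric_separable (R : realType) (T : Type) (dist : T -> T -> R) : Prop :=
  exists D : set T, countable D /\
    forall (x : T) (eps : R), 0 < eps -> exists2 y, D y & dist x y < eps.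

Definition metric_open (R : realType) (T : Type) (dist : T -> T -> R) (A : set T) : Prop :=
  forall x, A x -> exists2 eps : R, 0 < eps & forall y, dist x y < eps -> A y.

Definition polish_borel (R : realType) d (T : measurableType d) : Prop :=
  exists dist : T -> T -> R,
    [/\ is_metric dist, metric_complete dist, metric_separable dist &
        (@measurable d T) = <<s [set A | metric_open dist A] >>].

(* Admissible parameters (sigma, b, g0, g1).  Functions on R_+ x X are
   represented as functions R -> X -> R; only their values at x >= 0 matter. *)

Definition admissible (R : realType)
    dE (E : measurableType dE) d0 (U0 : measurableType d0)
    d1 (U1 : measurableType d1)
    (sigma : R -> E -> R) (b : R -> R) (g0 : R -> U0 -> R) (g1 : R -> U1 -> R)
    : Prop :=
  [/\ {within [set x : R | 0 <= x], continuous b} /\ 0 <= b 0,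
      measurable_fun ([set x : R | 0 <= x] `*` [set: E])
        (fun p : R * E => sigma p.1 p.2) /\ (forall u, sigma 0 u = 0),
      [/\ measurable_fun ([set x : R | 0 <= x] `*` [set: U0])
            (fun p : R * U0 => g0 p.1 p.2),
          (forall u, g0 0 u = 0) &
          (forall x u, 0 < x -> 0 <= g0 x u + x)] &
      measurable_fun ([set x : R | 0 <= x] `*` [set: U1])
        (fun p : R * U1 => g1 p.1 p.2) /\
      (forall x u, 0 <= x -> 0 <= g1 x u + x)].

Definition l0 (R : realType) (U0 : Type) (g0 : R -> U0 -> R) (x y : R) (u : U0) : R :=
  g0 x u - g0 y u.

(* rho is a nonnegative nondecreasing function on R_+ with
   \int_{0+} rho(z)^{-2} dz = infinity (with the convention 1/0 = +oo). *)
Definition osgood_rate (R : realType) (rho : R -> R) : Prop :=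
  [/\ (forall z, 0 <= z -> 0 <= rho z),
      (forall z w, 0 <= z -> z <= w -> rho z <= rho w) &
      (forall eps : R, 0 < eps ->
         (\int[lebesgue_measure]_(z in [set z : R | (0 < z <= eps)%R])
             (((rho z) ^+ 2)%:E)^-1 = +oo)%E)].

(* Condition (2.d).  The quotient in the inner integral is computed in the
   extended reals: a / 0 = +oo for a > 0 and 0 * (+oo) = 0. *)
Definition cond_2d (R : realType)
    dE (E : measurableType dE) d0 (U0 : measurableType d0)
    (pi : {measure set E -> \bar R}) (mu0 : {measure set U0 -> \bar R})
    (sigma : R -> E -> R) (g0 : R -> U0 -> R) : Prop :=
  forall m : nat, (1 <= m)%N ->
  exists rho : R -> R, exists c : nat -> R,
    [/\ osgood_rate rho,
        (forall n : nat, 0 <= c n),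
        (forall x y : R, 0 <= x <= m%:R -> 0 <= y <= m%:R ->
           (\int[pi]_u ((sigma x u - sigma y u) ^+ 2)%:E
              <= ((rho `|x - y|) ^+ 2)%:E)%E) &
        (forall (n : nat) (x y : R), (1 <= n)%N ->
           0 <= x <= m%:R -> 0 <= y <= m%:R ->
           (\int[mu0]_u
              \int[lebesgue_measure]_(t in [set t : R | (0 <= t <= 1)%R])
                 ((l0 g0 x y u ^+ 2 * (1 - t) *
                     (if `|l0 g0 x y u| <= n%:R then 1 else 0))%:E
                  * (((rho `|(x - y) + t * l0 g0 x y u|) ^+ 2)%:E)^-1)
              <= (c n)%:E)%E)].

Definition cond_2e (R : realType)
    dE (E : measurableType dE) d0 (U0 : measurableType d0)
    (pi : {measure set E -> \bar R}) (mu0 : {measure set U0 -> \bar R})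
    (sigma : R -> E -> R) (g0 : R -> U0 -> R) : Prop :=
  (forall u : U0, {homo (fun x => g0 x u) : x y / 0 <= x <= y >-> x <= y}) /\
  forall m : nat, (1 <= m)%N ->
  exists rho : R -> R,
    osgood_rate rho /\
    (forall x y : R, 0 <= x <= m%:R -> 0 <= y <= m%:R ->
       (\int[pi]_u ((sigma x u - sigma y u) ^+ 2)%:E
        + \int[mu0]_u (Num.min `|l0 g0 x y u| (l0 g0 x y u ^+ 2))%:E
          <= ((rho `|x - y|) ^+ 2)%:E)%E).

From HB Require Import structures.
From mathcomp Require Import all_boot all_order all_algebra.
From mathcomp Require Import all_classical all_reals all_analysis.
From mathcomp Require Import measurable_realfun.
Set Implicit Arguments. Unset Strict Implicit. Unset Printing Implicit Defensive.
Import Order.TTheory GRing.Theory Num.Theory.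
Local Open Scope classical_set_scope.
Local Open Scope ring_scope.

(* The same [rho] works, with [c n = n].  Monotonicity of [g0] makes
   [x - y] and [l0 x y u] of the same sign, so [|x - y + t l0| >= |x - y|]
   and the denominator [rho(|x - y + t l0|)^2] is at least [rho(|x - y|)^2].
   On [{|l0| <= n}] the numerator is at most [n min(|l0|, l0^2)], so the
   double integral is at most [n / rho(|x - y|)^2] times the [mu0]-integral
   of [min(|l0|, l0^2)], which (2.e) bounds by [rho(|x - y|)^2]. *)

Lemma sqr_indicator_le_min (R : realDomainType) (l : R) (n : nat) : (0 < n)%N ->
  l ^+ 2 * (if `|l| <= n%:R then 1 else 0) <= n%:R * Num.min `|l| (l ^+ 2).
Proof.
move=> n_gt0; case: ifP => [l_le_n|_]; last first.
  by rewrite mulr0 mulr_ge0 // le_min normr_ge0 sqr_ge0.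
rewrite mulr1 minr_pMr // le_min; apply/andP; split.
  by rewrite -real_normK ?num_real // expr2 ler_wpM2r.
by rewrite ler_peMl ?sqr_ge0 // ler1n.
Qed.

Lemma ler_normD_same_sign (R : realDomainType) (a b : R) :
  0 <= a * b -> `|a| <= `|a + b|.
Proof.
move=> ab_ge0; rewrite -ler_sqr ?nnegrE // !real_normK ?num_real //.
by rewrite sqrrD -addrA lerDl addr_ge0 ?sqr_ge0 ?mulrn_wge0.
Qed.

Lemma subr_homo_mul_ge0 (R : realDomainType) (f : R -> R) (x y : R) :
  {homo f : z w / 0 <= z <= w >-> z <= w} -> 0 <= x -> 0 <= y ->
  0 <= (x - y) * (f x - f y).
Proof.
move=> f_nd x_ge0 y_ge0; have [xy|yx] := lerP x y.
  by apply: mulr_le0; rewrite subr_le0 //; apply: f_nd; rewrite x_ge0.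
by apply: mulr_ge0; rewrite subr_ge0; [exact: ltW | apply: f_nd; rewrite y_ge0 ltW].
Qed.

Section extended_real_bounds.
Context (R : realType).
Local Open Scope ereal_scope.

(* With [q = 0] the right-hand side is [+oo] unless [c m = 0], which forces
   [p = 0]. *)
Lemma lee_div_le_mul_div (c m p q q' : R) : (0 <= c)%R -> (0 <= m)%R ->
  (0 <= p <= c * m)%R -> (0 <= q <= q')%R ->
  p%:E * (q'%:E)^-1 <= c%:E * (q%:E)^-1 * m%:E.
Proof.
move=> c_ge0 m_ge0 /andP[p_ge0 p_le] /andP[q_ge0 q_le].
have rhs_ge0 : 0 <= c%:E * (q%:E)^-1 * m%:E.
  by rewrite !mule_ge0 ?inve_ge0 ?lee_fin.
have [->|p_neq0] := eqVneq p 0%R; first by rewrite mul0e.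
have cm_gt0 : (0 < c * m)%R by rewrite (lt_le_trans _ p_le) // lt0r p_neq0.
have [c_gt0 m_gt0] : (0 < c)%R /\ (0 < m)%R.
  by split; rewrite lt0r ?c_ge0 ?m_ge0 andbT; apply: contraTneq cm_gt0 => ->;
    rewrite ?mul0r ?mulr0 ltxx.
have [->|q_neq0] := eqVneq q 0%R.
  by rewrite inve0 gt0_muley ?lte_fin // gt0_mulye ?lte_fin // leey.
have q_gt0 : (0 < q)%R by rewrite lt0r q_neq0.
have q'_gt0 : (0 < q')%R by exact: lt_le_trans q_le.
rewrite !inver (negbTE q_neq0) gt_eqF // -!EFinM lee_fin.
rewrite mulrAC; apply: ler_pM => //; first by rewrite invr_ge0 ltW.
by rewrite lef_pV2.
Qed.

(* For [r = 0] the left-hand side is [c * +oo * 0 = 0]. *)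
Lemma mule_inv_bound_le (c r : R) (I : \bar R) : (0 <= c)%R ->
  0 <= I <= r%:E -> c%:E * (r%:E)^-1 * I <= c%:E.
Proof.
move=> c_ge0 /andP[I_ge0 I_le].
have [r_gt0|r_le0] := ltrP 0%R r.
  have cr_ge0 : 0 <= (c / r)%:E.
    by rewrite lee_fin divr_ge0 // ltW.
  rewrite inver gt_eqF // -EFinM.
  apply: le_trans (lee_wpmul2l cr_ge0 I_le) _.
  by rewrite -EFinM lee_fin mulfVK ?gt_eqF.
have -> : I = 0 by apply: le_anti; rewrite I_ge0 (le_trans I_le) ?lee_fin.
by rewrite mule0 lee_fin.
Qed.

End extended_real_bounds.

Lemma measurable_fun_pair2_in d1 d2 d3 (T1 : measurableType d1)
    (T2 : measurableType d2) (T3 : measurableType d3)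
    (A : set T1) (f : T1 * T2 -> T3) (x : T1) :
  measurable A -> measurable_fun (A `*` setT) f -> A x ->
  measurable_fun setT (fun y => f (x, y)).
Proof.
move=> mA mf Ax; apply: (measurable_comp _ _ mf (pair1_measurable x)).
- exact: measurableX.
- by move=> _ [y _ <-].
Qed.

Section nonnegative_integral.
Local Open Scope ereal_scope.

(* The integral of a nonnegative function is the supremum of the integrals of
   the simple functions below it, so monotonicity needs no measurability. *)
Lemma ge0_le_integral_nonmeas d (T : measurableType d) (R : realType)
    (mu : {measure set T -> \bar R}) (D : set T) (f g : T -> \bar R) :
  (forall x, D x -> 0 <= f x) -> (forall x, D x -> f x <= g x) ->
  \int[mu]_(x in D) f x <= \int[mu]_(x in D) g x.
Proof.
move=> f_ge0 fg.
have g_ge0 x : D x -> 0 <= g x by move=> Dx; exact: le_trans (f_ge0 _ Dx) (fg _ Dx).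
rewrite (ge0_integralE _ f_ge0) (ge0_integralE _ g_ge0).
apply: ereal_sup_le => _ [h hf <-]; exists h => //= x.
apply: le_trans (hf x) _; rewrite /patch; case: ifP => // /[!inE] Dx.
exact: fg.
Qed.

Lemma integral_itv01_le (R : realType) (f : R -> \bar R) (M : \bar R) :
  (forall t, (0 <= t <= 1)%R -> 0 <= f t <= M) ->
  \int[lebesgue_measure]_(t in [set t : R | (0 <= t <= 1)%R]) f t <= M.
Proof.
move=> fM.
have itv01 : [set t : R | (0 <= t <= 1)%R] = [set` `[0%R, 1%R]].
  by apply/seteqP; split=> t /=; rewrite in_itv.
have leb01 : lebesgue_measure [set t : R | (0 <= t <= 1)%R] = 1.
  by rewrite itv01 lebesgue_measure_itv /= lte_fin ltr01 -EFinD subr0.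
rewrite -[leRHS]mule1 -leb01 -integral_cst; last by rewrite itv01.
apply: ge0_le_integral_nonmeas => t /fM /andP[] //.
Qed.

End nonnegative_integral.

Definition jump_integrand {R : realType} (rho : R -> R) (n : nat) (a l t : R)
    : \bar R :=
  ((l ^+ 2 * (1 - t) * (if `|l| <= n%:R then 1 else 0))%:E
   * ((rho `|a + t * l| ^+ 2)%:E)^-1)%E.

Section jump_integral.
Context (R : realType) (rho : R -> R).
Hypothesis rho_ge0 : forall z, 0 <= z -> 0 <= rho z.
Hypothesis rho_nd : forall z w, 0 <= z -> z <= w -> rho z <= rho w.
Local Open Scope ereal_scope.

Lemma jump_numerator_ge0 (n : nat) (l t : R) : (0 <= t <= 1)%R ->
  (0 <= l ^+ 2 * (1 - t) * (if `|l| <= n%:R then 1 else 0))%R.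
Proof.
case/andP=> _ t_le1; apply: mulr_ge0; last by case: ifP.
by rewrite mulr_ge0 ?sqr_ge0 // subr_ge0.
Qed.

Lemma jump_integrand_ge0 (n : nat) (a l t : R) : (0 <= t <= 1)%R ->
  0 <= jump_integrand rho n a l t.
Proof.
move=> t01; apply: mule_ge0; first by rewrite lee_fin jump_numerator_ge0.
by rewrite inve_ge0 lee_fin sqr_ge0.
Qed.

Lemma jump_integrand_le (n : nat) (a l t : R) : (0 < n)%N -> (0 <= a * l)%R ->
  (0 <= t <= 1)%R ->
  jump_integrand rho n a l t
    <= n%:R%:E * ((rho `|a| ^+ 2)%:E)^-1 * (Num.min `|l| (l ^+ 2))%:E.
Proof.
move=> n_gt0 al_ge0 t01; have /andP[t_ge0 _] := t01.
apply: lee_div_le_mul_div.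
- by rewrite ler0n.
- by rewrite le_min normr_ge0 sqr_ge0.
- rewrite jump_numerator_ge0 //=; apply: le_trans _ (sqr_indicator_le_min l n_gt0).
  rewrite mulrAC; apply: ler_piMr; last by rewrite lerBlDr lerDl.
  by rewrite mulr_ge0 ?sqr_ge0 //; case: ifP.
rewrite sqr_ge0 /= ler_sqr ?nnegrE ?rho_ge0 //.
by apply: rho_nd => //; apply: ler_normD_same_sign; rewrite mulrCA mulr_ge0.
Qed.

Lemma jump_integral_le d (T : measurableType d) (mu : {measure set T -> \bar R})
    (n : nat) (a : R) (l : T -> R) :
  (0 < n)%N -> measurable_fun setT l -> (forall u, 0 <= a * l u)%R ->
  \int[mu]_u (Num.min `|l u| (l u ^+ 2))%:E <= (rho `|a| ^+ 2)%:E ->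
  \int[mu]_u \int[lebesgue_measure]_(t in [set t : R | (0 <= t <= 1)%R])
      jump_integrand rho n a (l u) t <= n%:R%:E.
Proof.
move=> n_gt0 ml al_ge0 int_le.
set h := fun u => (Num.min `|l u| (l u ^+ 2))%R.
have h_ge0 u : (0 <= h u)%R by rewrite le_min normr_ge0 sqr_ge0.
have K_ge0 : 0 <= n%:R%:E * ((rho `|a| ^+ 2)%:E)^-1.
  by rewrite mule_ge0 // ?inve_ge0 lee_fin ?ler0n ?sqr_ge0.
have mh : measurable_fun setT (fun u => (h u)%:E).
  apply/measurable_EFinP; apply: measurable_minr.
    exact: measurableT_comp (@normr_measurable R setT) ml.
  exact: measurableT_comp (@exprn_measurable R setT 2) ml.
apply: le_trans.
  apply: (@ge0_le_integral_nonmeas _ _ _ mu setT _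
    (fun u => n%:R%:E * ((rho `|a| ^+ 2)%:E)^-1 * (h u)%:E)).
    by move=> u _; apply: integral_ge0 => t; exact: jump_integrand_ge0.
  move=> u _; apply: integral_itv01_le => t t01.
  by rewrite jump_integrand_ge0 // jump_integrand_le.
rewrite ge0_integralZl //; last by move=> u _; rewrite lee_fin.
apply: mule_inv_bound_le; first by rewrite ler0n.
by rewrite int_le andbT integral_ge0 // => u _; rewrite lee_fin.
Qed.

End jump_integral.

Theorem proposition2p4 (R : realType)
    (dE : measure_display) (E : measurableType dE)
    (d0 : measure_display) (U0 : measurableType d0)
    (d1 : measure_display) (U1 : measurableType d1)
    (pi : {measure set E -> \bar R}) (mu0 : {measure set U0 -> \bar R})
    (mu1 : {measure set U1 -> \bar R})
    (sigma : R -> E -> R) (b : R -> R) (g0 : R -> U0 -> R) (g1 : R -> U1 -> R) :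
  polish_borel R E -> polish_borel R U0 -> polish_borel R U1 ->
  sigma_finite setT pi -> sigma_finite setT mu0 -> sigma_finite setT mu1 ->
  admissible sigma b g0 g1 ->
  cond_2e pi mu0 sigma g0 ->
  cond_2d pi mu0 sigma g0.
Proof.
move=> _ _ _ _ _ _ [_ _ [mg0 _ _] _] [g0_nd bound_2e] m m_ge1.
have [rho [[rho_ge0 rho_nd rho_osgood] bound]] := bound_2e m m_ge1.
exists rho, (fun n => n%:R); split => //.
  move=> x y x_in y_in; apply: le_trans (bound x y x_in y_in).
  by rewrite leeDl // integral_ge0 // => u _; rewrite lee_fin le_min normr_ge0 sqr_ge0.
move=> n x y n_ge1 x_in y_in.
have [/andP[x_ge0 _] /andP[y_ge0 _]] := (x_in, y_in).
have mR_ge0 : measurable [set z : R | 0 <= z].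
  have -> : [set z : R | 0 <= z] = [set` `[0, +oo[].
    by apply/seteqP; split=> z /=; rewrite in_itv /= andbT.
  exact: measurable_itv.
have mg0_at z : 0 <= z -> measurable_fun setT (g0 z).
  by move=> z_ge0; exact: (measurable_fun_pair2_in mR_ge0 mg0).
apply: (@jump_integral_le _ _ rho_ge0 rho_nd _ _ mu0 n (x - y) (l0 g0 x y)) => //.
- by apply: measurable_realfun.measurable_funB; exact: mg0_at.
- by move=> u; exact: (subr_homo_mul_ge0 (f := g0^~ u)).
apply: le_trans (bound x y x_in y_in).
by rewrite leeDr // integral_ge0 // => u _; rewrite lee_fin sqr_ge0.
Qed.
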